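(* Let $p$ be an odd prime, $m\ge1$, $Q=T_{(p^m)}$ and $K=K_Q(p)$, and let $\phi=\phi_1$ be the map on $K$ defined below. If $S_\xi,S_{\xi'}\in Q$ satisfy $S_\xi^p\in Z(K)$ and $S_{\xi'}^p\in Z(K)$, then $\phi(S_\xi S_{\xi'})=\phi(S_\xi)\phi(S_{\xi'})$.
   Context: Let $\omega=e^{2\pi i/p}$, $\{|q\rangle:q\in\mathbb{Z}_p\}$ the computational basis of $\mathbb{C}^p$, $X|q\rangle=|q+1\rangle$. For $\xi:\mathbb{Z}_p\to U(1)$ let $S_\xi=\mathrm{diag}(\xi(0),\dots,\xi(p-1))$. $T=\{S_\xi:\prod_{q}\xi(q)=1\}$, $T_{(p^k)}=\{S\in T:S^{p^k}=\mathbbm{1}\}$. $K_Q(p)$ is the subgroup of $SU(p)$ generated by all $S_\xi X^b$, $S_\xi\in Q$, $b\in\mathbb{Z}_p$; each element is uniquely $S_\xi X^b$, written $(\xi,b)$. $Z(K)$ is the center of $K$. Every $S_\xi\in T_{(p^m)}$ has a unique expansion $\xi(q)=\exp\big(\sum_{j=1}^m\frac{2\pi i}{p^j}\sum_{a=0}^{p-1}\vartheta_{j,a}q^a\big)$ with $\vartheta_{j,a}\in\{0,\dots,p-1\}$ (set $\vartheta_{2,0}=0$ if $m=1$). Define $R(\xi)$ and $P(\xi)$ as the functions $R(\xi)(q)=\omega^{\vartheta_{1,0}+\vartheta_{1,1}q}e^{2\pi i\vartheta_{2,0}/p^2}$ and $P(\xi)(q)=\omega^{\vartheta_{1,0}+\vartheta_{1,1}q}$.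 Define $\phi_1:K\to U(p)$ by $\phi_1(S_\xi)=S_{R(\xi)}$, $\phi_1(S_\xi X)=S_{P(\xi)}X$, and for $2\le b\le p-1$, $\phi_1(M)=\phi_1(M^{y})^{b}$ where $M=S_\xi X^b$ and $y\in\{1,\dots,p-1\}$ with $yb\equiv1\bmod p$ (so $M^y$ has $X$-exponent $1$). *)

From HB Require Import structures.
From mathcomp Require Import all_boot all_order all_algebra.
From mathcomp Require Import reals trigo.
From mathcomp Require Import complex.
From Stdlib Require Import ClassicalEpsilon.

Import Order.TTheory GRing.Theory Num.Theory.
Local Open Scope ring_scope.

Section Defs.
Context {R : realType}.
Local Notation C := (complex R).

Definition expi (x : R) : C := Complex (cos x) (sin x).

Definition omega (p : nat) : C := expi (2 * pi / p%:R).

Definition Smat (p : nat) (xi : 'I_p -> C) : 'M[C]_p := diag_mx (\row_q xi q).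

(* X |q> = |q+1> : entry (i,j) is 1 iff i = j+1 mod p *)
Definition Xmat (p : nat) : 'M[C]_p :=
  \matrix_(i < p, j < p) (((i : nat) == (j.+1 %% p)%N)%:R : C).

Definition inT (p : nat) (xi : 'I_p -> C) : Prop :=
  (forall q, `|xi q| = 1) /\ \prod_(q < p) xi q = 1.

Definition inTpk (p k : nat) (xi : 'I_p -> C) : Prop :=
  inT p xi /\ (Smat p xi) ^+ (p ^ k) = 1.

(* K = K_Q(p) with Q = T_(p^m): the subgroup of matrices generated by all
   S_xi X^b (S_xi in Q, b in Z_p). *)
Inductive inK (p m : nat) : 'M[C]_p -> Prop :=
| inK1 : inK p m 1
| inKmul (xi : 'I_p -> C) (b : nat) (M : 'M[C]_p) :
    inTpk p m xi -> (b < p)%N -> inK p m M -> inK p m ((Smat p xi *m Xmat p ^+ b) *m M)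
| inKinv (xi : 'I_p -> C) (b : nat) (M : 'M[C]_p) :
    inTpk p m xi -> (b < p)%N -> inK p m M ->
    inK p m (invmx (Smat p xi *m Xmat p ^+ b) *m M).

Definition inZK (p m : nat) (M : 'M[C]_p) : Prop :=
  inK p m M /\ forall N, inK p m N -> M *m N = N *m M.

(* xi(q) = exp( sum_{j=1}^m 2 pi i / p^j sum_{a=0}^{p-1} theta_{j,a} q^a ),
   theta_{j,a} in {0..p-1}; entries outside 1<=j<=m, a<p are set to 0
   (normalisation, so that "theta_{2,0}=0 if m=1" holds). *)
Definition is_expansion (p m : nat) (xi : 'I_p -> C) (th : nat -> nat -> nat) : Prop :=
  (forall j a, (th j a < p)%N) /\
  (forall j a, (j == 0%N) || (m < j)%N || (p <= a)%N -> th j a = 0%N) /\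
  (forall q : 'I_p,
     xi q = expi (\sum_(1 <= j < m.+1)
                    (2 * pi / (p ^ j)%:R) * (\sum_(a < p) (th j a * q ^ a)%N%:R))).

Definition theta (p m : nat) (xi : 'I_p -> C) : nat -> nat -> nat :=
  epsilon (inhabits (fun _ _ => 0%N)) (is_expansion p m xi).

Definition Rfun (p m : nat) (xi : 'I_p -> C) : 'I_p -> C :=
  fun q => let th := theta p m xi in
    omega p ^+ (th 1 0 + th 1 1 * q)%N * expi (2 * pi * (th 2 0)%:R / (p ^ 2)%:R).

Definition Pfun (p m : nat) (xi : 'I_p -> C) : 'I_p -> C :=
  fun q => let th := theta p m xi in omega p ^+ (th 1 0 + th 1 1 * q)%N.

Definition inv_mod (p b : nat) : nat :=
  head 0%N [seq y <- iota 1 p.-1 | (y * b %% p == 1)%N].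

(* for M = S_xi X^b, M^y = S_eta X^(yb) with eta(q) = prod_{k<y} xi(q - k b) *)
Definition pow_diag (p : nat) (xi : 'I_p -> C) (b y : nat) : 'I_p -> C :=
  fun q => \prod_(k < y) xi (insubd q ((q + k * (p - b)) %% p)%N).

(* phi_1 on the element (xi, b) = S_xi X^b of K, 0 <= b <= p-1 *)
Definition phi1 (p m : nat) (xi : 'I_p -> C) (b : nat) : 'M[C]_p :=
  if b == 0%N then Smat p (Rfun p m xi)
  else if b == 1%N then Smat p (Pfun p m xi) *m Xmat p
  else let y := inv_mod p b in
       (Smat p (Pfun p m (pow_diag p xi b y)) *m Xmat p) ^+ b.

End Defs.

From HB Require Import structures.
From mathcomp Require Import all_boot all_order all_algebra.
From mathcomp Require Import reals trigo.
From mathcomp Require Import complex.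
From mathcomp Require Import zify ring lra.
From Stdlib Require Import ClassicalEpsilon.
Import Order.TTheory GRing.Theory Num.Theory.
Local Open Scope ring_scope.

(* Put N = p^(m+1) and w = omega N.  A function xi with xi^(p^m) = 1 is
   q |-> w^(p V(q)), where V(q) = sum_a c_a q^a and c_a is the base-p number with
   digits theta_{m,a}, ..., theta_{1,a}; similarly R(xi) is q |-> w^(A + p^m theta_{1,1} q)
   with A = p^m theta_{1,0} + p^(m-1) theta_{2,0}.
   If S_xi^p is central it commutes with X, so xi^p is constant and V(q) = V(0) modulo
   p^(m-1).  A polynomial of degree < p over Z/p^k is determined by its values at
   0, ..., p-1, hence c_a = p^(m-1) theta_{1,a} for a > 0; and det S_xi = 1 leaves only
   the digits theta_{1,0}, theta_{2,0} in c_0.  So xi(q) = w^(A + p^m W(q)) with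
   W(q) = sum_{a>0} theta_{1,a} q^a.  For a product xi xi' the exponents add modulo N:
   at q = 0 this gives A'' = A + A', and then W'' = W + W' modulo p, whose linear
   coefficients give theta''_{1,1} = theta_{1,1} + theta'_{1,1} modulo p, i.e.
   R(xi xi') = R(xi) R(xi'). *)

Section Expi.
Variable R : realType.
Implicit Types x y : R.

Lemma expiD x y : expi (x + y) = expi x * expi y.
Proof. by rewrite /expi cosD sinD /=; congr Complex; ring. Qed.

Lemma expi0 : expi (0 : R) = 1.
Proof. by rewrite /expi cos0 sin0. Qed.

Lemma expiMn x n : expi x ^+ n = expi (x *+ n).
Proof.
elim: n => [|n IHn]; first by rewrite expr0 mulr0n expi0.
by rewrite exprS IHn mulrS expiD.
Qed.

Lemma expi_neq1 x : 0 < x < 2 * pi -> expi x != 1.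
Proof.
move=> /andP[x_gt0 x_lt2pi]; apply/negP => /eqP[cos1 _].
have pi_gt0 := @pi_gt0 R.
have cos_lt1 y : 0 < y <= pi -> cos y < 1.
  move=> /andP[y_gt0 y_lepi].
  by rewrite -cos0 ltr_cos ?in_itv /= ?lexx ?y_lepi ?(ltW y_gt0) ?(ltW pi_gt0).
have [x_lepi|pi_ltx] := lerP x pi.
  by move: (cos_lt1 x); rewrite x_gt0 x_lepi cos1 ltxx => /(_ isT).
have : cos (2 * pi - x) < 1 by apply: cos_lt1; apply/andP; split; lra.
have -> : (2 * pi : R) = pi *+ 2 by rewrite mulr_natl.
by rewrite cosB cos2pi sin2pi mul1r mul0r addr0 cos1 ltxx.
Qed.

Lemma omegaX N k : omega N ^+ k = expi (2 * pi * k%:R / N%:R) :> complex R.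
Proof. by rewrite /omega expiMn; congr expi; rewrite [RHS]mulrAC mulr_natr. Qed.

Lemma omega_prim N : (0 < N)%N -> N.-primitive_root (omega N : complex R).
Proof.
move=> N_gt0; apply/andP; split=> //; apply/forallP => i; rewrite unity_rootE omegaX.
have [-> | ne] := eqVneq i.+1 N.
  rewrite mulfK ?pnatr_eq0 -?lt0n //.
  have -> : (2 * pi : R) = pi *+ 2 by rewrite mulr_natl.
  by rewrite /expi cos2pi sin2pi eqxx.
rewrite eqbF_neg; apply: expi_neq1.
have i_ltN : (i.+1 < N)%N by rewrite ltn_neqAle ne ltn_ord.
have two_pi_gt0 : (0 : R) < 2 * pi by rewrite mulr_gt0 ?pi_gt0.
rewrite -mulrA pmulr_rgt0 // gtr_pMr // divr_gt0 ?ltr0n //=.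
by rewrite ltr_pdivrMr ?ltr0n // mul1r ltr_nat.
Qed.

Lemma omegaMX d N k : (0 < d)%N ->
  omega (d * N) ^+ (d * k) = omega N ^+ k :> complex R.
Proof.
move=> d_gt0; rewrite !omegaX; have [->|N_gt0] := posnP N.
  by rewrite muln0 !invr0 !mulr0.
have d_neq0 : (d%:R : R) != 0 by rewrite pnatr_eq0 -lt0n.
have N_neq0 : (N%:R : R) != 0 by rewrite pnatr_eq0 -lt0n.
by rewrite !natrM; congr expi; field; rewrite d_neq0 N_neq0.
Qed.

End Expi.

Lemma eqmod_prime_poly_coef p (d e : nat -> nat) : prime p ->
  (forall q, (q < p)%N ->
     (\sum_(a < p) d a * q ^ a = \sum_(a < p) e a * q ^ a %[mod p])%N) ->
  forall a, (a < p)%N -> (d a = e a %[mod p])%N.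
Proof.
move=> p_pr evals_eq.
pose P : {poly 'F_p} := \poly_(a < p) ((d a)%:R - (e a)%:R).
have P0 : P = 0.
  apply/eqP; apply: contraT => P_neq0.
  pose rs := [seq ((val q)%:R : 'F_p) | q : 'I_p].
  have rs_uniq : uniq rs.
    rewrite map_inj_uniq ?enum_uniq // => i j /(congr1 (@nat_of_ord _)).
    by rewrite !val_Fp_nat // !modn_small ?ltn_ord // => /val_inj.
  have rs_roots : all (root P) rs.
    apply/allP => _ /mapP[q _ ->]; rewrite rootE horner_poly.
    under eq_bigr do rewrite mulrBl -!natrX -!natrM.
    by rewrite sumrB -!natr_sum -(Fp_nat_mod p_pr (\sum_i _)) evals_eq ?ltn_ord
               ?Fp_nat_mod ?subrr.
  have := max_poly_roots P_neq0 rs_roots rs_uniq.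
  by rewrite size_map size_enum_ord ltnNge (leq_trans (size_poly _ _)).
move=> a a_ltp; have /eqP := congr1 (fun P : {poly 'F_p} => P`_a) P0.
rewrite coef_poly a_ltp coef0 subr_eq0 => /eqP/(congr1 (@nat_of_ord _)).
by rewrite !val_Fp_nat.
Qed.

(* Induction on k: once the coefficients agree mod p, subtracting the common
   residues and dividing by p brings us down to p^(k-1). *)
Lemma eqmod_poly_coef p k (d e : nat -> nat) : prime p ->
  (forall q, (q < p)%N ->
     (\sum_(a < p) d a * q ^ a = \sum_(a < p) e a * q ^ a %[mod p ^ k])%N) ->
  forall a, (a < p)%N -> (d a = e a %[mod p ^ k])%N.
Proof.
move=> p_pr; have p_gt0 := prime_gt0 p_pr.
elim: k d e => [|k IHk] d e evals_eq a a_ltp; first by rewrite expn0 !modn1.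
have evals_eq_p q : (q < p)%N ->
    (\sum_(a < p) d a * q ^ a = \sum_(a < p) e a * q ^ a %[mod p])%N.
  move=> q_ltp; have /(congr1 (modn^~ p)) := evals_eq q q_ltp.
  by rewrite !modn_dvdm // expnS dvdn_mulr.
have low_eq := eqmod_prime_poly_coef _ _ _ p_pr evals_eq_p.
have split_coef (f : nat -> nat) q : (\sum_(a < p) f a * q ^ a =
    p * \sum_(a < p) (f a %/ p) * q ^ a + \sum_(a < p) (f a %% p) * q ^ a)%N.
  rewrite big_distrr -big_split /=; apply: eq_bigr => i _.
  by rewrite {1}(divn_eq (f i) p) mulnDl mulnA (mulnC p).
have evals_eq_high q : (q < p)%N -> (\sum_(a < p) (d a %/ p) * q ^ a =
    \sum_(a < p) (e a %/ p) * q ^ a %[mod p ^ k])%N.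
  move=> q_ltp; have := evals_eq q q_ltp; rewrite !split_coef.
  have -> : (\sum_(a < p) e a %% p * q ^ a = \sum_(a < p) d a %% p * q ^ a)%N.
    by apply: eq_bigr => i _; rewrite low_eq.
  by move/eqP; rewrite eqn_modDr expnS -!muln_modr eqn_pmul2l // => /eqP.
rewrite (divn_eq (d a) p) (divn_eq (e a) p) (low_eq a a_ltp).
apply/eqP; rewrite eqn_modDr expnS ![(_ * p)%N]mulnC -!muln_modr eqn_pmul2l //.
by apply/eqP; apply: (IHk (fun a => d a %/ p) (fun a => e a %/ p))%N.
Qed.

Lemma sum_digits_lt p n (f : nat -> nat) : (forall i, f i < p)%N ->
  (\sum_(i < n) f i * p ^ i < p ^ n)%N.
Proof.
move=> f_ltp; elim: n => [|n IHn]; first by rewrite big_ord0 expn0.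
rewrite big_ord_recr /= expnS; have := f_ltp n; move: IHn.
set S := (\sum_(i < n) _)%N; set P := (p ^ n)%N; nia.
Qed.

Lemma sum_digits_mod p n c : (0 < p)%N ->
  (\sum_(i < n) (c %/ p ^ i %% p) * p ^ i = c %% p ^ n)%N.
Proof.
move=> p_gt0; elim: n => [|n IHn]; first by rewrite big_ord0 expn0 modn1.
rewrite big_ord_recr /= IHn expnS.
have pn_gt0 : (0 < p ^ n)%N by rewrite expn_gt0 p_gt0.
set P := (p ^ n)%N in pn_gt0 *.
have low_lt : (c %% P < P)%N by rewrite ltn_mod.
have digit_lt : (c %/ P %% p < p)%N by rewrite ltn_mod.
have c_digits : c = ((c %/ P %/ p) * (p * P) + ((c %/ P %% p) * P + c %% P))%N.
  by rewrite {1}(divn_eq c P) {1}(divn_eq (c %/ P) p); ring.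
rewrite [in RHS]c_digits modnMDl [in RHS]modn_small 1?addnC //.
move: low_lt digit_lt (leq_mul digit_lt (leqnn P)); clearbody P; nia.
Qed.

Lemma low_digits_eq0 p n (f : nat -> nat) r : (forall i, f i < p)%N ->
  (p ^ n %| \sum_(i < n) f i * p ^ i + r)%N -> (p ^ n %| r)%N ->
  (\sum_(i < n) f i * p ^ i = 0)%N.
Proof.
move=> f_ltp + dvd_r; rewrite dvdn_addl // => dvd_low.
by apply/eqP; rewrite -(modn_small (sum_digits_lt _ n _ f_ltp)) -/(dvdn _ _).
Qed.

Lemma eqmod_addr_expn p k A B C D : (0 < p)%N ->
  (A = C %[mod p ^ k.+1])%N ->
  (A + p ^ k * B == C + p ^ k * D %[mod p ^ k.+1])%N = (B == D %[mod p])%N.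
Proof.
move=> p_gt0 eqAC; rewrite -modnDml eqAC modnDml eqn_modDl expnSr -!muln_modr.
by rewrite eqn_pmul2l ?expn_gt0 ?p_gt0.
Qed.

Lemma eqmod_pmul2l d m n k : (0 < d)%N ->
  (d * m == d * n %[mod d * k])%N = (m == n %[mod k])%N.
Proof. by move=> d_gt0; rewrite -!muln_modr eqn_pmul2l. Qed.

Section DiagonalMatrices.
Variables (R : realType) (n : nat).
Implicit Types f g : 'I_n -> complex R.

Lemma Smat_mul f g : Smat n f *m Smat n g = Smat n (fun q => f q * g q).
Proof. by rewrite /Smat mulmx_diag; congr diag_mx; apply/rowP => j; rewrite !mxE. Qed.

Lemma eq_Smat f g : f =1 g -> Smat n f = Smat n g.
Proof. by move=> fg; congr diag_mx; apply/rowP => j; rewrite !mxE fg. Qed.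

Lemma Smat_entry f q : Smat n f q q = f q.
Proof. by rewrite !mxE eqxx mulr1n. Qed.

Lemma Smat1 : Smat n (fun=> 1 : complex R) = 1%:M.
Proof. by apply/matrixP => i j; rewrite !mxE; case: eqP => // _; rewrite mulr1n. Qed.

Lemma SmatX f k : Smat n f ^+ k = Smat n (fun q => f q ^+ k).
Proof.
elim: k => [|k IHk].
  by rewrite expr0 (eq_Smat (fun q => f q ^+ 0) (fun=> 1)) ?Smat1 // => q; rewrite expr0.
by rewrite exprS IHk [_ * _]Smat_mul; apply: eq_Smat => q; rewrite exprS.
Qed.

End DiagonalMatrices.

Section Expansion.
Variables (R : realType) (p' : nat).
Local Notation p := p'.+1.
Hypothesis p_pr : prime p.
Implicit Types (th : nat -> nat -> nat) (xi : 'I_p -> complex R).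

(* The base-p number with digits th_{m,a}, ..., th_{1,a}; th_{1,a} is the
   most significant one. *)
Definition expansion_coef m th a := (\sum_(i < m) th (m - i)%N a * p ^ i)%N.

Definition expansion_poly m th q := (\sum_(a < p) expansion_coef m th a * q ^ a)%N.

Lemma expansion_omega m th (q : nat) :
  expi (\sum_(1 <= j < m.+1) (2 * pi / (p ^ j)%:R) * (\sum_(a < p) (th j a * q ^ a)%N%:R))
  = omega (p ^ m.+1) ^+ (p * expansion_poly m th q)%N :> complex R.
Proof.
rewrite omegaX big_add1 /= big_mkord (reindex_inj rev_ord_inj) /=; congr expi.
have -> : (p * expansion_poly m th q =
           \sum_(i < m) p ^ i.+1 * \sum_(a < p) th (m - i)%N a * q ^ a)%N.
  rewrite /expansion_poly /expansion_coef big_distrr /=.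
  under eq_bigr do rewrite big_distrl /= big_distrr /=.
  rewrite exchange_big /=; apply: eq_bigr => i _; rewrite big_distrr /=.
  by apply: eq_bigr => a _; rewrite expnS; ring.
rewrite natr_sum mulr_sumr mulr_suml; apply: eq_bigr => i _.
have pX_neq0 k : ((p ^ k)%:R : R) != 0 by rewrite pnatr_eq0 expn_eq0.
rewrite subnSK // natrM natr_sum.
have -> : (p ^ m.+1 = p ^ (m - i) * p ^ i.+1)%N by rewrite -expnD addnS subnK // ltnW.
by rewrite natrM; field; rewrite !pX_neq0.
Qed.

Lemma eqmod_poly_interpolation m (f : 'I_p -> nat) :
  exists c : 'I_p -> 'I_(p ^ m),
    forall q : 'I_p, (\sum_(a < p) c a * q ^ a = f q %[mod p ^ m])%N.
Proof.
have pm_gt0 : (0 < p ^ m)%N by rewrite expn_gt0.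
pose eval (c : {ffun 'I_p -> 'I_(p ^ m)}) : {ffun 'I_p -> 'I_(p ^ m)} :=
  [ffun q : 'I_p => Ordinal (ltn_pmod (\sum_(a < p) c a * (q : nat) ^ a)%N pm_gt0)].
have eval_inj : injective eval.
  move=> c c' /ffunP eval_eq; apply/ffunP => a; apply/val_inj.
  pose d b := (c (inord b) : nat); pose d' b := (c' (inord b) : nat).
  have sum_inord (g : {ffun 'I_p -> 'I_(p ^ m)}) (q : nat) :
      (\sum_(a < p) g (inord a) * q ^ a = \sum_(a < p) g a * q ^ a)%N.
    by apply: eq_bigr => i _; rewrite inord_val.
  have evals_eq q : (q < p)%N ->
      (\sum_(a < p) d a * q ^ a = \sum_(a < p) d' a * q ^ a %[mod p ^ m])%N.
    move=> q_ltp; rewrite /d /d' !sum_inord.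
    by have := congr1 val (eval_eq (inord q)); rewrite !ffunE /= inordK.
  have := eqmod_poly_coef _ _ _ _ p_pr evals_eq a (ltn_ord a).
  by rewrite /d /d' inord_val !modn_small.
have [interp _ interpK] := injF_bij eval_inj.
pose fm : {ffun 'I_p -> 'I_(p ^ m)} := [ffun q => Ordinal (ltn_pmod (f q) pm_gt0)].
exists (interp fm) => q.
by have := congr1 (fun g : {ffun 'I_p -> 'I_(p ^ m)} => val (g q)) (interpK fm); rewrite !ffunE.
Qed.

Lemma expansion_exists m xi :
  (forall q, xi q ^+ (p ^ m) = 1) -> exists th, is_expansion p m xi th.
Proof.
move=> xi_root; have pm_gt0 : (0 < p ^ m)%N by rewrite expn_gt0.
have w_prim := omega_prim R _ pm_gt0.
have [k xiE] : exists k : 'I_p -> nat, forall q, xi q = omega (p ^ m) ^+ k q.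
  by exists (fun q => val (sval (prim_rootP w_prim (xi_root q)))) => q; case: prim_rootP.
have [c c_evals] := eqmod_poly_interpolation m k.
pose th j a :=
  if (0 < j <= m)%N && (a < p)%N then ((c (inord a) : nat) %/ p ^ (m - j) %% p)%N else 0%N.
exists th; split; [|split].
- by move=> j a; rewrite /th; case: ifP => _ //; rewrite ltn_mod.
- move=> j a; rewrite /th; case: ifP => // /andP[/andP[j_gt0 j_lem] a_ltp].
  by rewrite -[j == 0%N]negbK -lt0n j_gt0 ltnNge j_lem leqNgt a_ltp.
move=> q; rewrite expansion_omega expnS omegaMX // xiE.
apply/eqP; rewrite (eq_prim_root_expr w_prim) -c_evals /expansion_poly; apply/eqP.
congr (_ %% _)%N; apply: eq_bigr => a _; congr (_ * _)%N.
rewrite -[LHS](@modn_small _ (p ^ m)) // -sum_digits_mod //.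
apply: eq_bigr => i _; rewrite /th ltn_ord andbT subn_gt0 ltn_ord leq_subr /=.
by rewrite inord_val subKn // ltnW.
Qed.

Lemma theta_expansion m xi :
  (forall q, xi q ^+ (p ^ m) = 1) -> is_expansion p m xi (theta p m xi).
Proof. by move=> xi_root; apply: epsilon_spec; exact: expansion_exists. Qed.

Lemma expansion_coef_split m th a : expansion_coef m.+1 th a =
  (\sum_(i < m) th (m.+1 - i)%N a * p ^ i + th 1 a * p ^ m)%N.
Proof. by rewrite /expansion_coef big_ord_recr /= subSnn. Qed.

Lemma expansion_poly0 m th : expansion_poly m th 0 = expansion_coef m th 0.
Proof.
by rewrite /expansion_poly big_ord_recl big1 ?addn0 ?muln1 // => i _; rewrite exp0n ?muln0.
Qed.

Definition tail_poly (c : nat -> nat) q := (\sum_(a < p') c a.+1 * q ^ a.+1)%N.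

Lemma tail_poly0 c : tail_poly c 0 = 0%N.
Proof. by rewrite /tail_poly big1 // => i _; rewrite exp0n ?muln0. Qed.

Lemma tail_poly_eqmod_coef k c d :
  (forall q, (q < p)%N -> (tail_poly c q = tail_poly d q %[mod p ^ k])%N) ->
  forall a, (0 < a < p)%N -> (c a = d a %[mod p ^ k])%N.
Proof.
move=> evals_eq [//|a] /andP[_ a_ltp].
pose drop0 (f : nat -> nat) b := if b is _.+1 then f b else 0%N.
have drop0_tail f q : (\sum_(b < p) drop0 f b * q ^ b = tail_poly f q)%N.
  by rewrite big_ord_recl.
apply: (eqmod_poly_coef _ _ (drop0 c) (drop0 d) p_pr _ a.+1 a_ltp) => q q_ltp.
by rewrite !drop0_tail evals_eq.
Qed.

(* Constancy modulo p^m forces each non-constant coefficient to be a multiple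
   of p^m, which leaves only its leading digit. *)
Lemma expansion_poly_tail m th : (forall j a, th j a < p)%N ->
  (forall q, (q < p)%N ->
     (expansion_poly m.+1 th q = expansion_poly m.+1 th 0 %[mod p ^ m])%N) ->
  forall q, expansion_poly m.+1 th q =
            (expansion_coef m.+1 th 0 + p ^ m * tail_poly (th 1%N) q)%N.
Proof.
move=> th_lt V_const.
have coef_tail a : (0 < a < p)%N -> expansion_coef m.+1 th a = (th 1 a * p ^ m)%N.
  move=> /andP[a_gt0 a_ltp].
  pose e b := if b == 0%N then expansion_coef m.+1 th 0 else 0%N.
  have dvd_coef : (p ^ m %| expansion_coef m.+1 th a)%N.
    have := eqmod_poly_coef _ m (expansion_coef m.+1 th) e p_pr _ a a_ltp.
    rewrite /e (negbTE (lt0n_neq0 a_gt0)) mod0n => coef_eq; apply/eqP/coef_eq => q q_ltp.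
    rewrite (V_const q q_ltp) expansion_poly0 big_ord_recl big1 ?addn0 ?muln1 //.
  move: dvd_coef; rewrite !expansion_coef_split => dvd_coef.
  have low_th_lt i : (th (m.+1 - i)%N a < p)%N by [].
  by rewrite (low_digits_eq0 _ _ _ _ low_th_lt dvd_coef) ?dvdn_mull.
move=> q; rewrite /expansion_poly big_ord_recl /= muln1 /tail_poly big_distrr /=.
congr (_ + _)%N; apply: eq_bigr => a _.
by rewrite coef_tail /bump ?add1n ?ltnS ?ltn_ord //= mulnAC mulnC.
Qed.

Lemma expansion_coef0 m th : (forall j a, th j a < p)%N ->
  (m = 0%N -> th 2 0 = 0%N) -> (p ^ m.-1 %| expansion_coef m.+1 th 0)%N ->
  (p * expansion_coef m.+1 th 0 = p ^ m.+1 * th 1 0 + p ^ m * th 2 0)%N.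
Proof.
case: m => [|m] th_lt th20 c0_dvd.
  by rewrite /expansion_coef big_ord1 th20 // muln0 addn0 muln1 expn1.
have low_th_lt i : (th (m.+2 - i)%N 0 < p)%N by [].
have m2_sub : (m.+2 - m = 2)%N by rewrite -addn2 addKn.
move: c0_dvd; rewrite !expansion_coef_split big_ord_recr /= m2_sub -addnA.
move=> /(low_digits_eq0 _ _ _ _ low_th_lt) ->; first by rewrite add0n !expnS; ring.
by rewrite dvdn_add ?dvdn_mull // expnS dvdn_mull.
Qed.

(* The diagonal content of "S_xi in T_(p^m) and S_xi^p in Z(K)". *)
Definition central_torsion m xi := [/\ forall q, xi q ^+ (p ^ m) = 1,
  forall q, xi q ^+ p = xi ord0 ^+ p & \prod_(q < p) xi q = 1].

Lemma central_torsionM m xi xi' : central_torsion m xi -> central_torsion m xi' ->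
  central_torsion m (fun q => xi q * xi' q).
Proof.
move=> [root const prod] [root' const' prod']; split.
- by move=> q; rewrite exprMn root root' mulr1.
- by move=> q; rewrite !exprMn const const'.
- by rewrite big_split /= prod prod' mulr1.
Qed.

Lemma central_torsion_omega m xi : central_torsion m.+1 xi ->
  forall q : 'I_p, xi q = omega (p ^ m.+2) ^+
    (p ^ m.+1 * theta p m.+1 xi 1 0 + p ^ m * theta p m.+1 xi 2 0
     + p ^ m.+1 * tail_poly (theta p m.+1 xi 1) q)%N.
Proof.
move=> [xi_root xi_pconst xi_prod].
have [th_lt [th_out xiE]] := theta_expansion _ _ xi_root.
set th := theta p m.+1 xi in th_lt th_out xiE *.
have pm_gt0 : (0 < p ^ m.+2)%N by rewrite expn_gt0.
have w_prim := omega_prim R _ pm_gt0; set w := omega (p ^ m.+2) in w_prim *.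
set V := expansion_poly m.+1 th; set c0 := expansion_coef m.+1 th 0.
have {}xiE q : xi q = w ^+ (p * V q)%N by rewrite xiE expansion_omega.
have V_const q : (q < p)%N -> (V q = V 0 %[mod p ^ m])%N.
  move=> q_ltp; have /eqP := xi_pconst (Ordinal q_ltp).
  rewrite !xiE -!exprM (eq_prim_root_expr w_prim) ![(_ * p)%N]mulnC !mulnA /=.
  have -> : (p ^ m.+2 = p * p * p ^ m)%N by rewrite !expnS mulnA.
  by rewrite eqmod_pmul2l ?muln_gt0 // => /eqP.
have V_tail := expansion_poly_tail _ _ th_lt V_const; rewrite -/V -/c0 in V_tail.
have c0_dvd : (p ^ m.-1 %| c0)%N.
  have /eqP := xi_prod; under eq_bigr do rewrite xiE.
  rewrite prodrXr -(expr0 w) (eq_prim_root_expr w_prim) mod0n -/(dvdn _ _).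
  rewrite -big_distrr /=; under eq_bigr do rewrite V_tail.
  rewrite big_split /= sum_nat_const card_ord -big_distrr /= expnS dvdn_pmul2l //.
  move=> /(dvdn_trans (dvdn_exp2l p (leqnSn m))); rewrite dvdn_addl; last exact: dvdn_mulr.
  by case: (m) => [|k]; rewrite /= ?expn0 ?dvd1n // expnS dvdn_pmul2l.
have th20 : m = 0%N -> th 2%N 0%N = 0%N by move=> m0; apply: th_out; rewrite m0.
have c0E := expansion_coef0 _ _ th_lt th20 c0_dvd.
by move=> q; rewrite xiE V_tail mulnDr c0E mulnA -expnS.
Qed.

Lemma Xmat_inK m : inK p m (Xmat p : 'M[complex R]_p).
Proof.
have T1 : inTpk p m (fun=> 1 : complex R).
  by rewrite /inTpk Smat1 expr1n; split; [split; [move=> q; rewrite normr1 | rewrite big1]|].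
have := inKmul _ _ _ 1 1 T1 (prime_gt1 p_pr) (inK1 p m).
by rewrite Smat1 mul1mx expr1 mulmx1.
Qed.

(* Commuting with X, a cyclic shift of the basis, makes a diagonal matrix scalar. *)
Lemma Smat_center_const m (g : 'I_p -> complex R) :
  inZK p m (Smat p g) -> forall q, g q = g ord0.
Proof.
move=> [_ centralS]; have SX := centralS _ (Xmat_inK m).
have g_succ (j : 'I_p) : g (inord (j.+1 %% p)) = g j.
  have := congr1 (fun A : 'M_p => A (inord (j.+1 %% p)) j) SX.
  by rewrite /= mul_mx_diag mul_diag_mx !mxE inordK ?ltn_pmod // eqxx mulr1 mul1r.
have g_inord k : (k < p)%N -> g (inord k) = g ord0.
  elim: k => [|k IHk] k_lt; first by congr g; apply/val_inj; rewrite /= inordK.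
  have := g_succ (inord k); rewrite inordK ?(ltn_trans (ltnSn k)) // modn_small // => ->.
  exact/IHk/(ltn_trans (ltnSn k)).
by move=> q; rewrite -(g_inord q (ltn_ord q)) inord_val.
Qed.

Lemma central_torsion_of_center m xi :
  inTpk p m xi -> inZK p m (Smat p xi ^+ p) -> central_torsion m xi.
Proof.
move=> [[_ xi_prod] xi_root]; rewrite SmatX => central_pow; split=> //.
- move=> q; have := congr1 (fun A : 'M_p => A q q) xi_root.
  by rewrite SmatX /= Smat_entry mxE eqxx.
- exact: Smat_center_const central_pow.
Qed.

Lemma Rfun_omega m xi (q : 'I_p) : Rfun p m.+1 xi q = omega (p ^ m.+2) ^+
  (p ^ m.+1 * theta p m.+1 xi 1 0 + p ^ m * theta p m.+1 xi 2 0
   + p ^ m.+1 * (theta p m.+1 xi 1 1 * q))%N.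
Proof.
rewrite /Rfun -omegaX -(omegaMX R (p ^ m.+1) p) ?expn_gt0 //.
rewrite -(omegaMX R (p ^ m) (p ^ 2)) ?expn_gt0 // -expnSr -expnD addn2 -exprD.
by congr (_ ^+ _); ring.
Qed.

Lemma Rfun_mul m xi xi' : central_torsion m.+1 xi -> central_torsion m.+1 xi' ->
  forall q, Rfun p m.+1 (fun q => xi q * xi' q) q = Rfun p m.+1 xi q * Rfun p m.+1 xi' q.
Proof.
move=> Cxi Cxi'; have Cxi'' := central_torsionM _ _ _ Cxi Cxi'.
have pm_gt0 : (0 < p ^ m.+2)%N by rewrite expn_gt0.
have w_prim := omega_prim R _ pm_gt0.
have F := central_torsion_omega _ _ Cxi; have F' := central_torsion_omega _ _ Cxi'.
have F'' := central_torsion_omega _ _ Cxi''.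
set th := theta p m.+1 xi in F *; set th' := theta p m.+1 xi' in F' *.
set th'' := theta p m.+1 _ in F'' *.
set A := (p ^ m.+1 * th 1 0 + p ^ m * th 2 0)%N in F *.
set A' := (p ^ m.+1 * th' 1 0 + p ^ m * th' 2 0)%N in F' *.
set A'' := (p ^ m.+1 * th'' 1 0 + p ^ m * th'' 2 0)%N in F'' *.
have key (q : 'I_p) : (A'' + p ^ m.+1 * tail_poly (th'' 1%N) q ==
    A + A' + p ^ m.+1 * (tail_poly (th 1%N) q + tail_poly (th' 1%N) q) %[mod p ^ m.+2])%N.
  by rewrite -(eq_prim_root_expr w_prim) -F'' F F' -exprD; apply/eqP; congr (_ ^+ _); ring.
have const : (A'' = A + A' %[mod p ^ m.+2])%N.
  by apply/eqP; have := key ord0; rewrite /= !tail_poly0 !muln0 !addn0.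
have lin : (th'' 1 1 = th 1 1 + th' 1 1 %[mod p])%N.
  have := tail_poly_eqmod_coef 1 (th'' 1%N) (fun a => th 1 a + th' 1 a)%N.
  rewrite expn1; apply; last exact: prime_gt1.
  move=> q q_ltp; have := key (Ordinal q_ltp).
  rewrite (eqmod_addr_expn _ _ _ _ _ _ _ const) // => /eqP ->.
  by rewrite /tail_poly -big_split; congr (_ %% _)%N; apply: eq_bigr => a _; rewrite mulnDl.
move=> q; rewrite !Rfun_omega -exprD; apply/eqP.
rewrite (eq_prim_root_expr w_prim) -/A -/A' -/A''.
rewrite (_ : _ + _ + _ = A + A' + p ^ m.+1 * ((th 1 1 + th' 1 1) * q))%N; last by ring.
by rewrite (eqmod_addr_expn _ _ _ _ _ _ _ const) // -modnMml lin modnMml.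
Qed.

End Expansion.

Theorem lemma5 (R : realType) (p m : nat) (xi xi' : 'I_p -> complex R) :
  prime p -> odd p -> (1 <= m)%N ->
  inTpk p m xi -> inTpk p m xi' ->
  inZK p m (Smat p xi ^+ p) -> inZK p m (Smat p xi' ^+ p) ->
  (* S_xi S_xi' = S_(xi xi'), i.e. the element (xi xi', 0) of K *)
  phi1 p m (fun q => xi q * xi' q) 0 = phi1 p m xi 0 *m phi1 p m xi' 0.
Proof.
(* The argument never uses that p is odd. *)
case: p xi xi' => [|p'] xi xi' p_pr _; first by [].
case: m => [|m] // _ Txi Txi' Zxi Zxi'.
rewrite /phi1 /= Smat_mul; apply: eq_Smat => q.
by apply: Rfun_mul => //; apply: central_torsion_of_center.
Qed.
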